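(* Let $\mathcal X\subseteq\mathbb R^n$, $\bm c\in\mathbb R^n$, $\varepsilon\in(0,1)$, scenarios $\bm\xi^1,\dots,\bm\xi^N$ with probabilities $p_1,\dots,p_N\ge0$, $\sum_i p_i=1$, and $g(\bm x,\bm\xi)=\max_{j\in[J]}g_j(\bm x,\bm\xi)$. Consider the chance-constrained program $$v^*=\min_{\bm x\in\mathcal X}\Big\{\bm c^\top\bm x:\ \sum_{i=1}^N p_i\,\mathbb I[g(\bm x,\bm\xi^i)\le 0]\ge 1-\varepsilon\Big\},$$ let $\bm x^*$ be an optimal solution, and define $I^*=\{i\in[N]: g(\bm x^*,\bm\xi^i)<0\}$. Suppose $\sum_{i\in I^*}p_i>1-\varepsilon$. Then $v^*=v^{\mathrm{CVaR}}_S$, and there exist $\widehat{\bm\alpha}\ge\bm e$, $\widehat\beta\le 0$, $\widehat{\bm s}\ge\bm 0$ such that $v^{\mathrm{CVaR}}_S=v^{\mathrm{CVaR}}(\widehat{\bm\alpha})$ and $(\bm x^*,\widehat\beta,\widehat{\bm s},\widehat{\bm\alpha})$ is an optimal solution of the optimally scaled CVaR approximation $$v^{\mathrm{CVaR}}_S=\inf_{\bm x\in\mathcal X,\beta\le0,\bm s\ge\bm0,\bm\alpha\ge\bm e}\Big\{\bm c^\top\bm x:\ \varepsilon\beta+\sum_{i=1}^Np_is_i\le0,\ s_i+\beta\ge\alpha_ig(\bm x,\bm\xi^i),\ i\in[N]\Big\}.$$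
   Context: $\mathbb I[\cdot]$ is the indicator function, $\bm e$ the all-ones vector, $[N]=\{1,\dots,N\}$. For $\bm\alpha\ge\bm e$, $v^{\mathrm{CVaR}}(\bm\alpha)=\min_{\bm x\in\mathcal X,\beta\le0,\bm s\ge\bm0}\{\bm c^\top\bm x:\ \varepsilon\beta+\sum_i p_is_i\le0,\ s_i+\beta\ge\alpha_i g(\bm x,\bm\xi^i),\ i\in[N]\}$ (value $+\infty$ if infeasible), and $v^{\mathrm{CVaR}}_S=\inf_{\bm\alpha\ge\bm e}v^{\mathrm{CVaR}}(\bm\alpha)$. *)

From mathcomp Require Import all_boot all_order all_algebra.
From mathcomp Require Import boolp classical_sets reals ereal.
Set Implicit Arguments. Unset Strict Implicit. Unset Printing Implicit Defensive.
Import Order.TTheory GRing.Theory Num.Theory.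
Local Open Scope classical_set_scope.
Local Open Scope ring_scope.

Section CVaR.
Variable R : realType.

Definition dotr n (c x : 'rV[R]_n) : R := \sum_(k < n) c 0 k * x 0 k.

Definition gmax n (T : Type) J (hJ : (0 < J)%N)
  (gs : 'I_J -> 'rV[R]_n -> T -> R) (x : 'rV[R]_n) (xi : T) : R :=
  \big[Num.max/gs (Ordinal hJ) x xi]_(j < J) gs j x xi.

Definition cc_feasible n N (g : 'rV[R]_n -> 'I_N -> R) (p : 'I_N -> R)
  (eps : R) (X : set 'rV[R]_n) (x : 'rV[R]_n) : Prop :=
  X x /\ 1 - eps <= \sum_(i < N | g x i <= 0) p i.

Definition cvar_feasible n N (g : 'rV[R]_n -> 'I_N -> R) (p : 'I_N -> R)
  (eps : R) (X : set 'rV[R]_n) (x : 'rV[R]_n) (beta : R) (s alpha : 'I_N -> R)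
  : Prop :=
  [/\ X x, beta <= 0, (forall i, 0 <= s i),
      eps * beta + \sum_(i < N) p i * s i <= 0 &
      forall i, alpha i * g x i <= s i + beta].

(* v^CVaR(alpha) (inf over an empty set is +oo) *)
Definition vCVaR n N (c : 'rV[R]_n) (g : 'rV[R]_n -> 'I_N -> R) (p : 'I_N -> R)
  (eps : R) (X : set 'rV[R]_n) (alpha : 'I_N -> R) : \bar R :=
  ereal_inf [set (dotr c x)%:E | x in
    [set x | exists beta s, cvar_feasible g p eps X x beta s alpha]].

Definition vCVaR_S n N (c : 'rV[R]_n) (g : 'rV[R]_n -> 'I_N -> R)
  (p : 'I_N -> R) (eps : R) (X : set 'rV[R]_n) : \bar R :=
  ereal_inf [set vCVaR c g p eps X alpha | alpha in
    [set alpha : 'I_N -> R | forall i, 1 <= alpha i]].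

End CVaR.

From mathcomp Require Import all_boot all_order all_algebra.
From mathcomp Require Import boolp classical_sets reals ereal.
From mathcomp Require Import lra.
Set Implicit Arguments. Unset Strict Implicit. Unset Printing Implicit Defensive.
Import Order.TTheory GRing.Theory Num.Theory.
Local Open Scope classical_set_scope.
Local Open Scope ring_scope.

(* Scaling by alpha >= 1 keeps the CVaR approximation conservative: a scenario
   with g_i > 0 forces s_i > -beta, so the budget eps beta + sum p_i s_i <= 0
   bounds the probability of such scenarios by eps (a Markov-type bound), whence
   v* <= v_S^CVaR.  Conversely, choose t so that the budget is tight for
   beta = -t, s_i = g_i + t on the scenarios with g(x*, xi^i) >= 0 and s_i = 0
   on the others; t >= 0 precisely because the former carry probability < eps.
   Scaling each strictly satisfied constraint by alpha_i = 1 + t / (-g_i) turns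
   it into g_i - t <= -t, so x* is feasible for the scaled problem and both
   values equal c^T x*. *)

Section ScaledCVaR.
Variables (R : realType) (n N : nat) (g : 'rV[R]_n -> 'I_N -> R).
Variables (p : 'I_N -> R) (eps : R) (X : set 'rV[R]_n).
Hypotheses (p_ge0 : forall i, 0 <= p i) (p_sum1 : \sum_(i < N) p i = 1).

Lemma cvar_feasible_violated_gt x beta s alpha i :
  (forall i, 1 <= alpha i) -> cvar_feasible g p eps X x beta s alpha ->
  0 < g x i -> - beta < s i.
Proof.
move=> alpha_ge1 [_ _ _ _ constr] gi_gt0.
have : g x i <= alpha i * g x i by rewrite ler_peMl // ltW.
have := constr i; lra.
Qed.

Lemma cvar_feasible_violation_le x beta s alpha :
  0 <= eps -> (forall i, 1 <= alpha i) ->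
  cvar_feasible g p eps X x beta s alpha ->
  \sum_(i < N | 0 < g x i) p i <= eps.
Proof.
move=> eps_ge0 alpha_ge1 feas; have [_ beta_le0 s_ge0 budget _] := feas.
have s_gt i : 0 < g x i -> - beta < s i := cvar_feasible_violated_gt alpha_ge1 feas.
have ps_ge0 i : 0 <= p i * s i by rewrite mulr_ge0.
have tail_le : \sum_(i < N | 0 < g x i) p i * s i <= - (eps * beta).
  apply: (@le_trans _ _ (\sum_(i < N) p i * s i)); last by lra.
  by rewrite [leRHS](bigID (fun i => 0 < g x i)) lerDl sumr_ge0.
have [beta0 | beta_neq0] := eqVneq beta 0.
  have tail0 : \sum_(i < N | 0 < g x i) p i * s i = 0.
    by apply/eqP; rewrite eq_le sumr_ge0 // andbT; move: tail_le; rewrite beta0; lra.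
  rewrite big1 // => i gi_gt0; apply/eqP.
  have si_gt0 : 0 < s i by rewrite -oppr0 -beta0 s_gt.
  have /eqP := psumr_eq0P (fun i _ => ps_ge0 i) tail0 gi_gt0.
  by rewrite mulf_eq0 (gt_eqF si_gt0) orbF.
have nbeta_gt0 : 0 < - beta by rewrite oppr_gt0 lt_neqAle beta_neq0.
rewrite -(ler_pM2l nbeta_gt0) mulr_sumr.
apply: le_trans (_ : _ <= \sum_(i < N | 0 < g x i) p i * s i) _; last by lra.
by apply: ler_sum => i gi_gt0; rewrite mulrC ler_wpM2l // ltW // s_gt.
Qed.

Lemma cvar_feasible_cc_feasible x beta s alpha :
  0 <= eps -> (forall i, 1 <= alpha i) ->
  cvar_feasible g p eps X x beta s alpha -> cc_feasible g p eps X x.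
Proof.
move=> eps_ge0 alpha_ge1 feas; split; first by case: feas.
have : \sum_(i < N | g x i <= 0) p i + \sum_(i < N | 0 < g x i) p i = 1.
  rewrite -p_sum1 [RHS](bigID (fun i => g x i <= 0)) /=.
  by under [X in _ = _ + X]eq_bigl do rewrite -ltNge.
have := cvar_feasible_violation_le eps_ge0 alpha_ge1 feas; lra.
Qed.

Section Scaling.
Variable x : 'rV[R]_n.
Hypothesis safe_mass_gt : 1 - eps < \sum_(i < N | g x i < 0) p i.

Definition cvar_shift : R :=
  (\sum_(i < N | 0 <= g x i) p i * g x i) / (eps - \sum_(i < N | 0 <= g x i) p i).

Definition cvar_scale i : R :=
  if g x i < 0 then 1 + cvar_shift / - g x i else 1.

Definition cvar_slack i : R :=
  if g x i < 0 then 0 else g x i + cvar_shift.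

Lemma sum_split_safe (F : 'I_N -> R) :
  \sum_(i < N) F i = \sum_(i < N | g x i < 0) F i + \sum_(i < N | 0 <= g x i) F i.
Proof. by rewrite (bigID (fun i => g x i < 0)) /=; under [X in _ + X]eq_bigl do rewrite -leNgt. Qed.

Lemma unsafe_mass_lt_eps : \sum_(i < N | 0 <= g x i) p i < eps.
Proof. by move: safe_mass_gt; rewrite -[1]p_sum1 sum_split_safe; lra. Qed.

Lemma cvar_shift_ge0 : 0 <= cvar_shift.
Proof.
apply: divr_ge0; first by apply: sumr_ge0 => i gi_ge0; rewrite mulr_ge0.
by rewrite subr_ge0 ltW // unsafe_mass_lt_eps.
Qed.

Lemma cvar_scale_ge1 i : 1 <= cvar_scale i.
Proof.
rewrite /cvar_scale; case: ifP => // gi_lt0.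
by rewrite lerDl divr_ge0 ?cvar_shift_ge0 // oppr_ge0 ltW.
Qed.

Lemma cvar_slack_ge0 i : 0 <= cvar_slack i.
Proof.
rewrite /cvar_slack; case: ltP => // gi_ge0.
by rewrite addr_ge0 ?cvar_shift_ge0.
Qed.

Lemma cvar_scale_constraint i : cvar_scale i * g x i <= cvar_slack i - cvar_shift.
Proof.
rewrite /cvar_scale /cvar_slack; case: ifP => gi_lt0; last by rewrite mul1r addrK.
rewrite mulrDl mul1r invrN mulrN mulNr mulfVK ?lt_eqF //; lra.
Qed.

Lemma cvar_budget_tight : eps * - cvar_shift + \sum_(i < N) p i * cvar_slack i = 0.
Proof.
rewrite sum_split_safe big1 => [|i gi_lt0]; last by rewrite /cvar_slack gi_lt0 mulr0.
rewrite add0r (eq_bigr (fun i => p i * g x i + cvar_shift * p i)); last first.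
  by move=> i gi_ge0; rewrite /cvar_slack ltNge gi_ge0 /= mulrDr (mulrC cvar_shift).
rewrite big_split /= -mulr_sumr.
have : cvar_shift * (eps - \sum_(i < N | 0 <= g x i) p i) =
       \sum_(i < N | 0 <= g x i) p i * g x i.
  by rewrite mulfVK // subr_eq0 gt_eqF ?unsafe_mass_lt_eps.
lra.
Qed.

Lemma cvar_scaling_feasible :
  X x -> cvar_feasible g p eps X x (- cvar_shift) cvar_slack cvar_scale.
Proof.
move=> Xx; split => //.
- by rewrite oppr_le0 cvar_shift_ge0.
- exact: cvar_slack_ge0.
- by rewrite cvar_budget_tight.
- exact: cvar_scale_constraint.
Qed.

End Scaling.

Variable c : 'rV[R]_n.

Lemma vCVaR_le_feasible alpha x beta s :
  cvar_feasible g p eps X x beta s alpha ->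
  (vCVaR c g p eps X alpha <= (dotr c x)%:E)%E.
Proof. by move=> feas; apply: ereal_inf_lbound; exists x => //; exists beta, s. Qed.

Lemma vCVaR_ge alpha v :
  (forall x beta s, cvar_feasible g p eps X x beta s alpha -> v <= dotr c x) ->
  (v%:E <= vCVaR c g p eps X alpha)%E.
Proof.
move=> lower; apply: le_ereal_inf_tmp => _ [x [beta [s feas]] <-].
by rewrite lee_fin (lower _ _ _ feas).
Qed.

Lemma vCVaR_S_le alpha :
  (forall i, 1 <= alpha i) -> (vCVaR_S c g p eps X <= vCVaR c g p eps X alpha)%E.
Proof. by move=> alpha_ge1; apply: ereal_inf_lbound; exists alpha. Qed.

Lemma vCVaR_S_ge v :
  (forall alpha x beta s, (forall i, 1 <= alpha i) ->
     cvar_feasible g p eps X x beta s alpha -> v <= dotr c x) ->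
  (v%:E <= vCVaR_S c g p eps X)%E.
Proof.
move=> lower; apply: le_ereal_inf_tmp => _ [alpha alpha_ge1 <-].
by apply: vCVaR_ge => x beta s; apply: lower.
Qed.

End ScaledCVaR.

Theorem theorem1 (R : realType) (n N J : nat) (hJ : (0 < J)%N)
  (Xi : Type) (X : set 'rV[R]_n) (c : 'rV[R]_n) (eps : R)
  (xi : 'I_N -> Xi) (p : 'I_N -> R)
  (gs : 'I_J -> 'rV[R]_n -> Xi -> R) (xstar : 'rV[R]_n) :
  0 < eps < 1 ->
  (forall i, 0 <= p i) ->
  \sum_(i < N) p i = 1 ->
  let g := fun x i => gmax hJ gs x (xi i) in
  (* x* is an optimal solution of the chance-constrained program *)
  cc_feasible g p eps X xstar ->
  (forall x, cc_feasible g p eps X x -> dotr c xstar <= dotr c x) ->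
  (* sum_{i in I*} p_i > 1 - eps, I* = {i : g(x*, xi^i) < 0} *)
  1 - eps < \sum_(i < N | g xstar i < 0) p i ->
  (dotr c xstar)%:E = vCVaR_S c g p eps X /\
  exists (alpha : 'I_N -> R) (beta : R) (s : 'I_N -> R),
    [/\ (forall i, 1 <= alpha i), beta <= 0, (forall i, 0 <= s i),
        vCVaR_S c g p eps X = vCVaR c g p eps X alpha &
        (* (x*, beta, s, alpha) is optimal for the joint scaled CVaR problem *)
        (cvar_feasible g p eps X xstar beta s alpha /\
         forall x beta' s' alpha', (forall i, 1 <= alpha' i) ->
           cvar_feasible g p eps X x beta' s' alpha' ->
           dotr c xstar <= dotr c x)].
Proof.
move=> /andP[eps_gt0 _] p_ge0 p_sum1 g [Xxstar _] xstar_opt safe_mass_gt.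
have lower alpha x beta s : (forall i, 1 <= alpha i) ->
    cvar_feasible g p eps X x beta s alpha -> dotr c xstar <= dotr c x.
  move=> alpha_ge1 feas; apply/xstar_opt.
  exact/(cvar_feasible_cc_feasible p_ge0 p_sum1 (ltW eps_gt0) alpha_ge1 feas).
set alpha := cvar_scale g p eps xstar.
have alpha_ge1 := cvar_scale_ge1 p_ge0 p_sum1 safe_mass_gt.
have feas := cvar_scaling_feasible p_ge0 p_sum1 safe_mass_gt Xxstar.
have v_alpha : vCVaR c g p eps X alpha = (dotr c xstar)%:E.
  by apply/le_anti; rewrite (vCVaR_le_feasible _ feas) vCVaR_ge // => x beta s; apply: lower.
have v_S : vCVaR_S c g p eps X = (dotr c xstar)%:E.
  by apply/le_anti; rewrite -{1}v_alpha vCVaR_S_le // (vCVaR_S_ge lower).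
split; first by rewrite v_S.
exists alpha, (- cvar_shift g p eps xstar), (cvar_slack g p eps xstar); split => //.
- by rewrite oppr_le0 cvar_shift_ge0.
- by move=> i; apply: cvar_slack_ge0.
- by rewrite v_S v_alpha.
- by split; [exact: feas | move=> x beta s alpha'; apply: lower].
Qed.
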